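(* Let $\mathbb{F}$ be a finite field, $K=\mathbb{F}(\!(\pi)\!)$ and $\mathcal{O}=\mathbb{F}[\![\pi]\!]$. The action of $\mathrm{AGL}_1(\mathcal{O})$ on $\mathcal{T}_\mathcal{O}$ is coarsely diagonal.
   Context: $\mathrm{AGL}_1(\mathcal{O})=\mathcal{O}^\times\ltimes\mathcal{O}$ consists of pairs $(\alpha,\beta)$ acting on $K$ by $\gamma\mapsto\alpha\gamma+\beta$. With $\mathfrak{m}=\pi\mathcal{O}$, the tree $\mathcal{T}_\mathcal{O}$ has vertices $\gamma\bmod\mathfrak{m}^e$ ($\gamma\in\mathcal{O}$, $e\ge0$), with $\gamma\bmod\mathfrak{m}^e$ adjacent to $\delta\bmod\mathfrak{m}^f$ iff $|e-f|=1$ and $\gamma\equiv\delta\bmod\mathfrak{m}^{\min\{e,f\}}$; $\mathrm{AGL}_1(\mathcal{O})$ acts (faithfully) by $(\alpha,\beta).(\gamma\bmod\mathfrak{m}^e)=\alpha\gamma+\beta\bmod\mathfrak{m}^e$. Ordering $\mathbb{F}$ identifies $\mathcal{T}_\mathcal{O}$ with the rooted $|\mathbb{F}|$-ary tree. For a tree automorphism $f$ with wreath recursion $f=\rho(f)(f_1,\dots,f_m)$ (where $f(iw)=\rho(f)(i)f_i(w)$), its states form the smallest set containing $f$ and closed under $f\mapsto f_i$. A group $H$ of tree automorphisms is coarsely diagonal if for every $h\in H$ and every state $h'$ of $h$, $(h')^{-1}h$ has finite order; an action is coarsely diagonal if it is faithful and its image is. *)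

From mathcomp Require Import all_boot all_algebra.
Set Implicit Arguments. Unset Strict Implicit. Unset Printing Implicit Defensive.
Import GRing.Theory.
Local Open Scope ring_scope.

(* O = F[[pi]] : a power series is its coefficient sequence. *)
Section Defs.
Variable F : finFieldType.

Definition pseries := nat -> F.

Definition ps_mul (a b : pseries) : pseries :=
  fun n => \sum_(i < n.+1) a i * b (n - i)%N.
Definition ps_add (a b : pseries) : pseries := fun n => a n + b n.

Definition ps_unit (a : pseries) : Prop := a 0%N != 0.

(* The tree T_O: the vertex gamma mod m^e is identified with the word
   [gamma_0; ...; gamma_{e-1}] in seq F (rooted |F|-ary tree, alphabet F). *)
Definition word_series (w : seq F) : pseries := fun j => nth 0 w j.

Definition agl_act (alpha beta : pseries) (w : seq F) : seq F :=
  mkseq (fun i => ps_add (ps_mul alpha (word_series w)) beta i) (size w).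

Definition is_tree_aut (f : seq F -> seq F) : Prop :=
  bijective f /\ (forall w, size (f w) = size w) /\
  (forall w k, f (take k w) = take k (f w)).

(* section f_i in the wreath recursion f(iw) = rho(f)(i) f_i(w) *)
Definition section (f : seq F -> seq F) (i : F) : seq F -> seq F :=
  fun w => behead (f (i :: w)).

Inductive is_state (f : seq F -> seq F) : (seq F -> seq F) -> Prop :=
  | state_self : is_state f f
  | state_sec g i : is_state f g -> is_state f (section g i).

(* H coarsely diagonal: for h in H and h' a state of h, h'^{-1} h has finite
   order (g below is h'^{-1} h, characterised by h' o g = h). *)
Definition coarsely_diagonal (H : (seq F -> seq F) -> Prop) : Prop :=
  forall h, H h -> forall h', is_state h h' ->
    exists g : seq F -> seq F, (forall w, h' (g w) = h w) /\
      exists n : nat, (0 < n)%N /\ forall w, iter n g w = w.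

End Defs.

From mathcomp Require Import all_boot all_algebra.
From mathcomp Require Import finfield zify.
Set Implicit Arguments. Unset Strict Implicit. Unset Printing Implicit Defensive.
Import GRing.Theory.

(* Write h = (alpha, beta) for the map gamma |-> alpha gamma + beta on the words
   gamma mod m^e.  Deleting the first letter i shows that the section h_i is
   (alpha, beta'), with beta' the coefficients of beta + alpha i shifted by one;
   so every state h' of h has the same linear part alpha.  Consequently
   h'^-1 h is the translation gamma |-> gamma + c with c = alpha^-1 (beta - beta'),
   whose p-th power is the identity for p the characteristic of F. *)

Section PowerSeries.
Variable F : finFieldType.
Local Open Scope ring_scope.
Implicit Types a d X Y : pseries F.

Lemma eq_ps_mulr a X Y n : (forall j, (j <= n)%N -> X j = Y j) ->
  ps_mul a X n = ps_mul a Y n.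
Proof. by move=> eqXY; apply: eq_bigr => i _; rewrite eqXY // leq_subr. Qed.

Lemma ps_mul_recl a X n :
  ps_mul a X n = a 0%N * X n + \sum_(i < n) a i.+1 * X (n - i.+1)%N.
Proof. by rewrite /ps_mul big_ord_recl /= subn0. Qed.

Lemma ps_mulDr a X Y n :
  ps_mul a (fun j => X j + Y j) n = ps_mul a X n + ps_mul a Y n.
Proof. by rewrite /ps_mul -big_split; apply: eq_bigr => i _; rewrite mulrDr. Qed.

Lemma ps_mul_delta0 a n : ps_mul a (fun j => (j == 0%N)%:R) n = a n.
Proof.
rewrite /ps_mul big_ord_recr /= subnn mulr1 big1 ?add0r // => i _.
by rewrite subn_eq0 leqNgt ltn_ord mulr0.
Qed.

Lemma ps_mulI_prefix a X Y n : a 0%N != 0 ->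
  (forall k, (k < n)%N -> ps_mul a X k = ps_mul a Y k) ->
  forall k, (k < n)%N -> X k = Y k.
Proof.
move=> a0 eqaXY; elim/ltn_ind => k IH lt_kn.
have := eqaXY k lt_kn; rewrite !ps_mul_recl.
rewrite (eq_bigr (fun i : 'I_k => a i.+1 * Y (k - i.+1)%N)) => [|i _].
  by move/addIr/(mulfI a0).
by rewrite IH //; have := ltn_ord i; lia.
Qed.

Section Division.
Variables a d : pseries F.

(* The first n coefficients of d / a, each obtained from the previous ones by
   solving the n-th coefficient equation of a * X = d. *)
Fixpoint ps_div_prefix n : seq F :=
  if n is n'.+1 then
    let s := ps_div_prefix n' in
    rcons s ((d n' - \sum_(i < n') a i.+1 * nth 0 s (n' - i.+1)%N) / a 0%N)
  else [::].

Definition ps_div : pseries F := fun k => nth 0 (ps_div_prefix k.+1) k.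

Lemma size_ps_div_prefix n : size (ps_div_prefix n) = n.
Proof. by elim: n => //= n IH; rewrite size_rcons IH. Qed.

Lemma nth_ps_div_prefix n k : (k < n)%N -> nth 0 (ps_div_prefix n) k = ps_div k.
Proof.
rewrite /ps_div; elim: n => // n IH; rewrite ltnS leq_eqVlt => /orP[/eqP-> //|].
by move=> lt_kn; rewrite /= nth_rcons size_ps_div_prefix lt_kn IH.
Qed.

Lemma ps_divP : a 0%N != 0 -> forall n, ps_mul a ps_div n = d n.
Proof.
move=> a0 n; rewrite ps_mul_recl {1}/ps_div /= nth_rcons size_ps_div_prefix.
rewrite ltnn eqxx (eq_bigr (fun i : 'I_n => a i.+1 * ps_div (n - i.+1)%N)).
  by rewrite mulrC divfK // subrK.
by move=> i _; rewrite nth_ps_div_prefix //; have := ltn_ord i; lia.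
Qed.

End Division.
End PowerSeries.

Section AffineAction.
Variable F : finFieldType.
Local Open Scope ring_scope.
Implicit Types (alpha beta c : pseries F) (w : seq F).

Lemma size_agl_act alpha beta w : size (agl_act alpha beta w) = size w.
Proof. exact: size_mkseq. Qed.

Lemma nth_agl_act alpha beta w k : (k < size w)%N ->
  nth 0 (agl_act alpha beta w) k = ps_mul alpha (word_series w) k + beta k.
Proof. exact: nth_mkseq. Qed.

Lemma eq_agl_act alpha beta beta' w : (forall j, beta j = beta' j) ->
  agl_act alpha beta w = agl_act alpha beta' w.
Proof. by move=> eq_beta; apply: eq_mkseq => i; rewrite /ps_add eq_beta. Qed.

Lemma agl_act_take alpha beta w k :
  agl_act alpha beta (take k w) = take k (agl_act alpha beta w).
Proof.
apply: (eq_from_nth (x0 := 0)); first by rewrite size_agl_act !size_take size_agl_act.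
rewrite size_agl_act size_take_min => i; rewrite leq_min => /andP[lt_ik lt_iw].
rewrite nth_agl_act ?size_take_min ?leq_min ?lt_ik // nth_take // nth_agl_act //.
congr (_ + _); apply: eq_ps_mulr => j le_ji.
by rewrite /word_series nth_take // (leq_ltn_trans le_ji).
Qed.

Lemma agl_act_inj alpha beta : ps_unit alpha -> injective (agl_act alpha beta).
Proof.
move=> alpha0 w1 w2 eq_w.
have eq_size : size w1 = size w2 by rewrite -(size_agl_act alpha beta) eq_w size_agl_act.
apply: (eq_from_nth (x0 := 0)) => // k lt_kw.
apply: (ps_mulI_prefix alpha0 _ lt_kw) => j lt_jw.
have := congr1 (nth 0 ^~ j) eq_w.
by rewrite !nth_agl_act -?eq_size // => /addIr.
Qed.

Definition agl_act_inv alpha beta w : seq F :=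
  mkseq (ps_div alpha (fun j => nth 0 w j - beta j)) (size w).

Lemma agl_act_invK alpha beta : ps_unit alpha ->
  cancel (agl_act_inv alpha beta) (agl_act alpha beta).
Proof.
move=> alpha0 w; apply: (eq_from_nth (x0 := 0)).
  by rewrite size_agl_act size_mkseq.
rewrite size_agl_act size_mkseq => k lt_kw.
rewrite nth_agl_act ?size_mkseq //.
rewrite (@eq_ps_mulr _ _ _ (ps_div alpha (fun j => nth 0 w j - beta j))).
  by rewrite ps_divP // subrK.
by move=> j le_jk; rewrite /word_series nth_mkseq // (leq_ltn_trans le_jk).
Qed.

Lemma agl_act_tree_aut alpha beta : ps_unit alpha -> is_tree_aut (agl_act alpha beta).
Proof.
move=> alpha0; split; last by split=> [w|w k]; rewrite ?size_agl_act ?agl_act_take.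
exists (agl_act_inv alpha beta); last exact: agl_act_invK.
by move=> w; apply: (agl_act_inj (beta := beta) alpha0); rewrite agl_act_invK.
Qed.

Lemma word_series_nseq0 n j : word_series (nseq n (0 : F)) j = 0.
Proof. by rewrite /word_series nth_nseq if_same. Qed.

Lemma word_series_delta0 n j :
  word_series ((1 : F) :: nseq n 0) j = (j == 0%N)%:R.
Proof. by rewrite /word_series; case: j => [|j] //=; rewrite nth_nseq if_same. Qed.

Lemma agl_act_faithful alpha beta alpha' beta' :
  (forall w, agl_act alpha beta w = agl_act alpha' beta' w) ->
  (forall n, alpha n = alpha' n) /\ (forall n, beta n = beta' n).
Proof.
move=> eq_act.
have eq_beta n : beta n = beta' n.
  have := congr1 (nth 0 ^~ n) (eq_act (nseq n.+1 0)).
  rewrite !nth_agl_act ?size_nseq // /ps_mul !big1 ?add0r // => i _;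
    by rewrite word_series_nseq0 mulr0.
split=> // n; have := congr1 (nth 0 ^~ n) (eq_act (1 :: nseq n 0)).
rewrite !nth_agl_act /= ?size_nseq // eq_beta => /addIr.
by rewrite !(eq_ps_mulr _ (fun j _ => word_series_delta0 n j)) !ps_mul_delta0.
Qed.

Lemma section_agl_act alpha beta i w :
  section (agl_act alpha beta) i w =
  agl_act alpha (fun m => beta m.+1 + alpha m.+1 * i) w.
Proof.
apply: (eq_from_nth (x0 := 0)); first by rewrite size_behead !size_agl_act.
rewrite size_behead size_agl_act => k lt_kw.
rewrite nth_behead !nth_agl_act // /ps_mul big_ord_recr /= subnn.
rewrite (eq_bigr (fun j : 'I_k.+1 => alpha j * word_series w (k - j)%N)) => [|j _].
  by rewrite -addrA (addrC (alpha k.+1 * i)).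
by rewrite /= subSn // -ltnS.
Qed.

Lemma state_agl_act alpha beta h' : is_state (agl_act alpha beta) h' ->
  exists beta', forall w, h' w = agl_act alpha beta' w.
Proof.
elim=> [|g i _ [beta' eq_g]]; first by exists beta.
exists (fun m => beta' m.+1 + alpha m.+1 * i) => w.
by rewrite -section_agl_act /section eq_g.
Qed.

Definition translate c w : seq F := mkseq (fun j => nth 0 w j + c j) (size w).

Lemma agl_act_translate alpha beta c w :
  agl_act alpha beta (translate c w) =
  agl_act alpha (fun j => ps_mul alpha c j + beta j) w.
Proof.
apply: (eq_from_nth (x0 := 0)); first by rewrite !size_agl_act size_mkseq.
rewrite size_agl_act size_mkseq => k lt_kw.
rewrite !nth_agl_act ?size_mkseq // addrA -ps_mulDr.
congr (_ + _); apply: eq_ps_mulr => j le_jk.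
by rewrite /word_series nth_mkseq // (leq_ltn_trans le_jk).
Qed.

Lemma iter_translate c n w :
  iter n (translate c) w = mkseq (fun j => nth 0 w j + c j *+ n) (size w).
Proof.
elim: n w => [|n IH] w; rewrite ?iterS ?IH /translate;
  apply: (eq_from_nth (x0 := 0)); rewrite ?size_mkseq // => k lt_kw.
  by rewrite nth_mkseq // addr0.
by rewrite !nth_mkseq ?size_mkseq // mulrSr addrA.
Qed.

Lemma translate_finite_order c : exists2 n, (0 < n)%N & forall w, iter n (translate c) w = w.
Proof.
have [p _ pF] := finPcharP F; exists p; first exact/prime_gt0/(pcharf_prime pF).
move=> w; rewrite iter_translate; apply: (eq_from_nth (x0 := 0)); rewrite size_mkseq //.
by move=> k lt_kw; rewrite nth_mkseq // (mulrn_pchar pF) addr0.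
Qed.

Lemma agl_act_coarsely_diagonal :
  coarsely_diagonal (fun h => exists alpha beta, ps_unit alpha /\ h = agl_act alpha beta).
Proof.
move=> _ [alpha [beta [alpha0 ->]]] h' /state_agl_act [beta' eq_h'].
pose c := ps_div alpha (fun j => beta j - beta' j).
exists (translate c); split.
  move=> w; rewrite eq_h' agl_act_translate; apply: eq_agl_act => j.
  by rewrite ps_divP // subrK.
by have [n n_gt0 ord_n] := translate_finite_order c; exists n.
Qed.

End AffineAction.

Theorem lemma6p7 (F : finFieldType) :
  (* the action is by tree automorphisms *)
  (forall alpha beta : pseries F, ps_unit alpha -> is_tree_aut (agl_act alpha beta)) /\
  (* faithful *)
  (forall alpha beta alpha' beta' : pseries F, ps_unit alpha -> ps_unit alpha' ->
     (forall w, agl_act alpha beta w = agl_act alpha' beta' w) ->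
     (forall n, alpha n = alpha' n) /\ (forall n, beta n = beta' n)) /\
  (* the image is coarsely diagonal *)
  coarsely_diagonal
    (fun h => exists alpha beta : pseries F, ps_unit alpha /\ h = agl_act alpha beta).
Proof.
split; first exact: agl_act_tree_aut.
split; first by move=> alpha beta alpha' beta' _ _; exact: agl_act_faithful.
exact: agl_act_coarsely_diagonal.
Qed.
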